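(* Let $Q$ be a non-degenerate non-definite hermitian form on $\mathbb{C}^N$, and let $(w_1,\dots,w_N)$ be a basis of $\mathbb{C}^N$ with $Q(w_i)=0$ for $1\le i\le N$ and $Q(w_i,w_j)\ne0$ for $1\le i\ne j\le N$. Let $G_i$ be the stabilizer of $w_i$ in $SU(Q)$. Then the smallest closed subgroup of $SU(Q)$ containing $G_1,\dots,G_N$ is $SU(Q)$.
   Context: $Q(u)$ denotes $Q(u,u)$; $SU(Q)$ is the group of determinant-one linear automorphisms of $\mathbb{C}^N$ preserving $Q$; ''closed'' refers to the usual topology. *)

From mathcomp Require Import all_boot all_algebra.
From mathcomp Require Import complex.
From mathcomp Require Import all_classical all_reals topology normedtype.
Import GRing.Theory Num.Theory numFieldNormedType.Exports.

Set Implicit Arguments.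
Unset Strict Implicit.
Unset Printing Implicit Defensive.

Local Open Scope classical_set_scope.
Local Open Scope ring_scope.

Section Defs.
Variable R : realType.
Local Notation C := R[i].

Definition adjmx (m n : nat) (A : 'M[C]_(m, n)) : 'M[C]_(n, m) :=
  (map_mx (fun z : C => z^*) A)^T.

Definition hermitian_mx (N : nat) (H : 'M[C]_N) : Prop := adjmx H = H.

(* Q(u, v) = u^* H v : conjugate-linear in u, linear in v *)
Definition Qform (N : nat) (H : 'M[C]_N) (u v : 'cV[C]_N) : C :=
  (adjmx u *m H *m v) 0 0.

Definition hf_nondegenerate (N : nat) (H : 'M[C]_N) : Prop := H \in unitmx.

(* non-definite: Q(u) takes both (strictly) positive and negative values
   (the order on C = R[i] is: 0 < z iff z is real and positive) *)
Definition hf_nondefinite (N : nat) (H : 'M[C]_N) : Prop :=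
  (exists u, 0 < Qform H u u) /\ (exists v, Qform H v v < 0).

Definition SUQ (N : nat) (H : 'M[C]_N) : set 'M[C]_N :=
  [set g | \det g = 1 /\ forall u v, Qform H (g *m u) (g *m v) = Qform H u v].

Definition stabQ (N : nat) (H : 'M[C]_N) (w : 'cV[C]_N) : set 'M[C]_N :=
  [set g | SUQ H g /\ g *m w = w].

Definition is_basis_fam (N : nat) (w : 'I_N -> 'cV[C]_N) : Prop :=
  (\matrix_(i, j) w j i 0) \in unitmx.

(* usual topology on M_N(C) ~ (R^2)^(N x N) *)
Definition mx_of_pairs (N : nat) (B : 'M[R * R]_N) : 'M[C]_N :=
  \matrix_(i, j) (Complex (B i j).1 (B i j).2 : C).

Definition mx_closed (N : nat) (S : set 'M[C]_N) : Prop :=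
  closed [set B : 'M[R * R]_N | S (mx_of_pairs B)].

Definition is_subgroup (N : nat) (S : set 'M[C]_N) : Prop :=
  [/\ S 1%:M,
      (forall g h, S g -> S h -> S (g *m h)) &
      (forall g, S g -> S (invmx g))].

Definition closed_subgroup_gen (N : nat) (H : 'M[C]_N) (I : Type)
    (A : I -> set 'M[C]_N) : set 'M[C]_N :=
  \bigcap_(S in [set S : set 'M[C]_N | [/\ S `<=` SUQ H, is_subgroup S,
                                          mx_closed S & forall i, A i `<=` S]]) S.

End Defs.

From mathcomp Require Import all_boot all_algebra.
From mathcomp Require Import complex.
From mathcomp Require Import all_classical all_reals topology normedtype.
From mathcomp Require Import ring.
Import order.Order.TTheory GRing.Theory Num.Theory numFieldNormedType.Exports.

Set Implicit Arguments.
Unset Strict Implicit.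
Unset Printing Implicit Defensive.

Local Open Scope classical_set_scope.
Local Open Scope ring_scope.

(* Already the stabilizers G1, G2 of two of the w_i generate SU(Q) as an
   abstract group; closedness only serves to make SU(Q) itself a candidate.
   For an isotropic w, the Eichler transformations
   x |-> x + Q(w,x) y - Q(y,x) w + a Q(w,x) w  (with Q(w,y) = 0 and
   a + a^* + Q(y,y) = 0) lie in the stabilizer of w, so it acts transitively on
   the isotropic x with a prescribed value Q(w,x) <> 0.  Alternating such moves
   from G1 and G2 replaces g in SU(Q) by t g, t in <G1, G2>, with t g w1 = l w1
   and t g w2 = (l^* )^-1 w2.  Three more moves bring l w1 back to w1; unless l
   is real they need a z orthogonal to w1, w2 with Q(z,z) <> 0, and such a z
   exists: otherwise span(w1, w2) is all of C^N and det (t g) = l / l^* = 1. *)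

(** * Continuity through real and imaginary parts *)

Lemma continuous_mx_entry (T : topologicalType) m n (i : 'I_m) (j : 'I_n) :
  continuous (fun M : 'M[T]_(m, n) => M i j).
Proof.
move=> M A /= hA.
exists (fun i' j' => if (i' == i) && (j' == j) then A else setT).
  by move=> i' j'; case: (i' =P i) => [->|_]; case: (j' =P j) => [->|_] //=;
    apply: filterT.
by move=> M' /(_ i j); rewrite !eqxx.
Qed.

Section ReImContinuity.
Variables (R : realType) (T : topologicalType).
Local Notation C := R[i].
Implicit Types (f g : T -> C) (c : C).

Definition continuous_ReIm f :=
  continuous (fun t => complex.Re (f t)) /\ continuous (fun t => complex.Im (f t)).

Lemma continuous_ReIm_cst c : continuous_ReIm (fun=> c).
Proof. by split; apply: cst_continuous. Qed.

Lemma continuous_ReImD f g :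
  continuous_ReIm f -> continuous_ReIm g -> continuous_ReIm (f \+ g).
Proof.
move=> [f1 f2] [g1 g2]; split => t /=.
- have -> : (fun t => complex.Re (f t + g t)) =
            (fun t => complex.Re (f t) + complex.Re (g t)).
    by apply: funext => t'; case: (f t') (g t') => [? ?] [? ?].
  exact: continuousD (f1 t) (g1 t).
- have -> : (fun t => complex.Im (f t + g t)) =
            (fun t => complex.Im (f t) + complex.Im (g t)).
    by apply: funext => t'; case: (f t') (g t') => [? ?] [? ?].
  exact: continuousD (f2 t) (g2 t).
Qed.

Lemma continuous_ReImM f g :
  continuous_ReIm f -> continuous_ReIm g -> continuous_ReIm (f \* g).
Proof.
move=> [f1 f2] [g1 g2]; split => t /=.
- have -> : (fun t => complex.Re (f t * g t)) = (fun t =>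
      complex.Re (f t) * complex.Re (g t) - complex.Im (f t) * complex.Im (g t)).
    by apply: funext => t'; case: (f t') (g t') => [? ?] [? ?].
  exact: continuousB (continuousM (f1 t) (g1 t)) (continuousM (f2 t) (g2 t)).
- have -> : (fun t => complex.Im (f t * g t)) = (fun t =>
      complex.Re (f t) * complex.Im (g t) + complex.Im (f t) * complex.Re (g t)).
    by apply: funext => t'; case: (f t') (g t') => [? ?] [? ?].
  exact: continuousD (continuousM (f1 t) (g2 t)) (continuousM (f2 t) (g1 t)).
Qed.

Lemma continuous_ReIm_conj f :
  continuous_ReIm f -> continuous_ReIm (fun t => (f t)^*).
Proof.
move=> [f1 f2]; split => t.
- have -> : (fun t => complex.Re (f t)^*) = (fun t => complex.Re (f t)).
    by apply: funext => t'; case: (f t').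
  exact: f1.
- have -> : (fun t => complex.Im (f t)^*) = (fun t => - complex.Im (f t)).
    by apply: funext => t'; case: (f t').
  exact: continuousN (f2 t).
Qed.

Lemma continuous_ReIm_sum (I : Type) (r : seq I) (P : pred I) (F : I -> T -> C) :
  (forall i, continuous_ReIm (F i)) ->
  continuous_ReIm (fun t => \sum_(i <- r | P i) F i t).
Proof.
move=> hF; rewrite -fct_sumE.
apply: (big_ind continuous_ReIm); [exact: continuous_ReIm_cst | | by []].
exact: continuous_ReImD.
Qed.

Lemma continuous_ReIm_prod (I : Type) (r : seq I) (P : pred I) (F : I -> T -> C) :
  (forall i, continuous_ReIm (F i)) ->
  continuous_ReIm (fun t => \prod_(i <- r | P i) F i t).
Proof.
move=> hF; rewrite -fct_prodE.
apply: (big_ind continuous_ReIm); [exact: continuous_ReIm_cst | | by []].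
exact: continuous_ReImM.
Qed.

Lemma closed_ReIm_eq f c : continuous_ReIm f -> closed [set t | f t = c].
Proof.
move=> [f1 f2].
have -> : [set t | f t = c] =
    (fun t => complex.Re (f t)) @^-1` [set complex.Re c] `&`
    (fun t => complex.Im (f t)) @^-1` [set complex.Im c].
  apply/seteqP; split => t /=; first by move=> ->.
  by case: (f t) c => [a b] [a' b'] /= [-> ->].
by apply: closedI; apply: preimage_closed.
Qed.

Definition continuous_ReIm_mx m n (A : T -> 'M[C]_(m, n)) :=
  forall i j, continuous_ReIm (fun t => A t i j).

Lemma continuous_ReIm_mx_cst m n (A : 'M[C]_(m, n)) :
  continuous_ReIm_mx (fun=> A).
Proof. by move=> i j; exact: continuous_ReIm_cst. Qed.

Lemma continuous_ReIm_mulmx m n p (A : T -> 'M[C]_(m, n)) (B : T -> 'M[C]_(n, p)) :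
  continuous_ReIm_mx A -> continuous_ReIm_mx B ->
  continuous_ReIm_mx (fun t => A t *m B t).
Proof.
move=> hA hB i j.
have -> : (fun t => (A t *m B t) i j) = (fun t => \sum_k A t i k * B t k j).
  by apply: funext => t; rewrite mxE.
by apply: continuous_ReIm_sum => k; exact: continuous_ReImM.
Qed.

Lemma continuous_ReIm_adjmx m n (A : T -> 'M[C]_(m, n)) :
  continuous_ReIm_mx A -> continuous_ReIm_mx (fun t => adjmx (A t)).
Proof.
move=> hA i j.
have -> : (fun t => adjmx (A t) i j) = (fun t => (A t j i)^*).
  by apply: funext => t; rewrite !mxE.
exact: continuous_ReIm_conj.
Qed.

Lemma continuous_ReIm_det n (A : T -> 'M[C]_n) :
  continuous_ReIm_mx A -> continuous_ReIm (fun t => \det (A t)).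
Proof.
move=> hA; apply: continuous_ReIm_sum => s.
apply: continuous_ReImM; first exact: continuous_ReIm_cst.
by apply: continuous_ReIm_prod => i; exact: hA.
Qed.

End ReImContinuity.

Lemma continuous_ReIm_mx_of_pairs (R : realType) (N : nat) :
  continuous_ReIm_mx (@mx_of_pairs R N).
Proof.
move=> i j; split.
- have -> : (fun B : 'M[R * R]_N => complex.Re (mx_of_pairs B i j)) =
            fst \o (fun B => B i j).
    by apply: funext => B; rewrite mxE.
  by move=> B; apply: continuous_comp; [exact: continuous_mx_entry | exact: cvg_fst].
- have -> : (fun B : 'M[R * R]_N => complex.Im (mx_of_pairs B i j)) =
            snd \o (fun B => B i j).
    by apply: funext => B; rewrite mxE.
  by move=> B; apply: continuous_comp; [exact: continuous_mx_entry | exact: cvg_snd].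
Qed.

Lemma SUQ_closed (R : realType) (N : nat) (H : 'M[R[i]]_N) : mx_closed (SUQ H).
Proof.
rewrite /mx_closed; set P := @mx_of_pairs R N.
have -> : [set B | SUQ H (P B)] =
    [set B | \det (P B) = 1] `&`
    \bigcap_(uv in [set: 'cV[R[i]]_N * 'cV[R[i]]_N])
       [set B | Qform H (P B *m uv.1) (P B *m uv.2) = Qform H uv.1 uv.2].
  apply/seteqP; split => B /= [hdet hQ]; split => //.
    by move=> [u v] _; exact: hQ.
  by move=> u v; exact: (hQ (u, v)).
apply: closedI.
  exact/closed_ReIm_eq/continuous_ReIm_det/continuous_ReIm_mx_of_pairs.
apply: closed_bigI => -[u v] _; apply: closed_ReIm_eq.
have hP := @continuous_ReIm_mx_of_pairs R N.
have hPu := continuous_ReIm_mulmx hP (continuous_ReIm_mx_cst _ u).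
have hPv := continuous_ReIm_mulmx hP (continuous_ReIm_mx_cst _ v).
exact: continuous_ReIm_mulmx (continuous_ReIm_mulmx (continuous_ReIm_adjmx hPu)
  (continuous_ReIm_mx_cst _ H)) hPv 0 0.
Qed.

(** * Hermitian forms *)

Section Adjoint.
Variable R : realType.
Local Notation C := R[i].

Lemma adjmxD m n (A B : 'M[C]_(m, n)) : adjmx (A + B) = adjmx A + adjmx B.
Proof. by rewrite /adjmx map_mxD linearD. Qed.

Lemma adjmxZ m n a (A : 'M[C]_(m, n)) : adjmx (a *: A) = a^* *: adjmx A.
Proof. by rewrite /adjmx map_mxZ linearZ. Qed.

Lemma adjmxM m n p (A : 'M[C]_(m, n)) (B : 'M[C]_(n, p)) :
  adjmx (A *m B) = adjmx B *m adjmx A.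
Proof. by rewrite /adjmx map_mxM trmx_mul. Qed.

Lemma adjmxK m n (A : 'M[C]_(m, n)) : adjmx (adjmx A) = A.
Proof. by apply/matrixP => i j; rewrite !mxE conjCK. Qed.

End Adjoint.

Lemma det1D_rank1 (R : comNzRingType) n (c : 'cV[R]_n) (r : 'rV[R]_n) :
  \det (1%:M + c *m r) = 1 + (r *m c) 0 0.
Proof.
have e1 : block_mx 1%:M (- r) c 1%:M =
    block_mx 1%:M 0 c 1%:M *m block_mx 1%:M (- r) 0 (1%:M + c *m r).
  rewrite mulmx_block ?mul1mx ?mul0mx ?mulmx1 ?mulmx0 ?addr0 ?add0r.
  by rewrite mulmxN (addrC 1%:M) addKr.
have e2 : block_mx 1%:M (- r) c 1%:M =
    block_mx (1%:M + r *m c) (- r) 0 1%:M *m block_mx 1%:M 0 c 1%:M.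
  rewrite mulmx_block ?mul1mx ?mul0mx ?mulmx1 ?mulmx0 ?addr0 ?add0r.
  by rewrite mulNmx addrK.
have := congr1 determinant e1; rewrite e2 !det_mulmx det_lblock det_ublock.
rewrite det_ublock !det1 !mul1r !mulr1 => <-.
by rewrite det_mx11 mxE [in X in X + _]mxE eqxx.
Qed.

Section HermitianForm.
Variables (R : realType) (N : nat) (H : 'M[R[i]]_N).
Local Notation C := R[i].
Local Notation Q := (Qform H).
Implicit Types (u v x y z : 'cV[C]_N) (a : C).

Lemma QformDl u1 u2 v : Q (u1 + u2) v = Q u1 v + Q u2 v.
Proof. by rewrite /Qform adjmxD !mulmxDl mxE. Qed.

Lemma QformDr u v1 v2 : Q u (v1 + v2) = Q u v1 + Q u v2.
Proof. by rewrite /Qform !mulmxDr mxE. Qed.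

Lemma QformZl a u v : Q (a *: u) v = a^* * Q u v.
Proof. by rewrite /Qform adjmxZ -!scalemxAl mxE. Qed.

Lemma QformZr a u v : Q u (a *: v) = a * Q u v.
Proof. by rewrite /Qform -!scalemxAr mxE. Qed.

Lemma QformNl u v : Q (- u) v = - Q u v.
Proof. by rewrite -scaleN1r QformZl rmorphN rmorph1 mulN1r. Qed.

Lemma QformNr u v : Q u (- v) = - Q u v.
Proof. by rewrite -scaleN1r QformZr mulN1r. Qed.

Lemma QformBl u1 u2 v : Q (u1 - u2) v = Q u1 v - Q u2 v.
Proof. by rewrite QformDl QformNl. Qed.

Lemma QformBr u v1 v2 : Q u (v1 - v2) = Q u v1 - Q u v2.
Proof. by rewrite QformDr QformNr. Qed.

Lemma Qform0l v : Q 0 v = 0.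
Proof. by rewrite -(scale0r 0) QformZl rmorph0 mul0r. Qed.

Lemma Qform0r u : Q u 0 = 0.
Proof. by rewrite -(scale0r 0) QformZr mul0r. Qed.

Definition QformE :=
  (QformDl, QformDr, QformBl, QformBr, QformNl, QformNr, QformZl, QformZr,
   Qform0l, Qform0r).

Hypothesis hH : hermitian_mx H.

Lemma conj_Qform u v : (Q u v)^* = Q v u.
Proof.
rewrite /Qform.
have -> : ((adjmx u *m H *m v) 0 0)^* = adjmx (adjmx u *m H *m v) 0 0.
  by rewrite !mxE.
by rewrite !adjmxM adjmxK hH mulmxA.
Qed.

Lemma Qform_polarization z1 z2 :
  Q z1 z1 = 0 -> Q z2 z2 = 0 -> Q (z1 + z2) (z1 + z2) = 0 ->
  Q (z1 + 'i *: z2) (z1 + 'i *: z2) = 0 -> Q z1 z2 = 0.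
Proof.
rewrite !QformE -[Q z2 z1]conj_Qform conjCi => -> -> /=.
rewrite !(add0r, addr0); set a := Q z1 z2 => hre him.
have : (a + a^*) - 'i * ('i * a + (- 'i * a^* + - 'i * ('i * 0))) =
       (1 - 'i ^+ 2) * a + (1 + 'i ^+ 2) * a^* by ring.
rewrite hre him mulr0 subr0 sqrCi subrr mul0r addr0 opprK => /esym/eqP.
by rewrite mulf_eq0 -mulr2n mulrn_eq0 oner_eq0 => /eqP.
Qed.

End HermitianForm.

(** * The group SU(Q) and Eichler transformations *)

Section UnitaryGroup.
Variables (R : realType) (N : nat) (H : 'M[R[i]]_N).

Lemma SUQ1 : SUQ H 1%:M.
Proof. by split=> [|u v]; rewrite ?det1 ?mul1mx. Qed.

Lemma SUQ_unitmx g : SUQ H g -> g \in unitmx.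
Proof. by case=> hdet _; rewrite unitmxE hdet unitr1. Qed.

Lemma SUQ_mul g h : SUQ H g -> SUQ H h -> SUQ H (g *m h).
Proof.
move=> [g1 gQ] [h1 hQ]; split=> [|u v]; first by rewrite det_mulmx g1 h1 mulr1.
by rewrite -!mulmxA gQ hQ.
Qed.

Lemma SUQ_inv g : SUQ H g -> SUQ H (invmx g).
Proof.
move=> hg; have gU := SUQ_unitmx hg; case: hg => g1 gQ.
split=> [|u v]; first by rewrite det_inv g1 invr1.
by rewrite -gQ !mulKVmx.
Qed.

Lemma SUQ_subgroup : is_subgroup (SUQ H).
Proof. by split; [exact: SUQ1 | exact: SUQ_mul | exact: SUQ_inv]. Qed.

Lemma stabQ1 w : stabQ H w 1%:M.
Proof. by split; [exact: SUQ1 | rewrite mul1mx]. Qed.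

End UnitaryGroup.

Lemma mulmx_col_row (R : comNzRingType) m n (c : 'cV[R]_m) (r : 'rV[R]_n)
    (v : 'cV[R]_n) :
  c *m r *m v = (r *m v) 0 0 *: c.
Proof. by rewrite -mulmxA {1}[r *m v]mx11_scalar mul_mx_scalar. Qed.

Section Eichler.
Variables (R : realType) (N : nat) (H : 'M[R[i]]_N).
Hypothesis hH : hermitian_mx H.
Local Notation C := R[i].
Local Notation Q := (Qform H).
Implicit Types (u v w x y : 'cV[C]_N) (a : C).

Definition Qdual u : 'rV[C]_N := adjmx u *m H.

Lemma QdualE u v : (Qdual u *m v) 0 0 = Q u v.
Proof. by []. Qed.

Definition eichler w y a : 'M[C]_N :=
  1%:M + y *m Qdual w - w *m Qdual y + a *: (w *m Qdual w).

Lemma eichlerE w y a x :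
  eichler w y a *m x = x + Q w x *: y - Q y x *: w + (a * Q w x) *: w.
Proof.
rewrite /eichler !mulmxDl mulNmx mul1mx -scalemxAl !mulmx_col_row !QdualE.
by rewrite scalerA mulrC.
Qed.

Section IsotropicAxis.
Variables (w y : 'cV[C]_N) (a : C).
Hypotheses (hww : Q w w = 0) (hwy : Q w y = 0).

Let hyw : Q y w = 0.
Proof. by rewrite -conj_Qform // hwy conjC0. Qed.

Lemma eichler_Qform : a + a^* + Q y y = 0 ->
  forall u v, Q (eichler w y a *m u) (eichler w y a *m v) = Q u v.
Proof.
move=> ha u v.
have ha' : a^* = - a - Q y y by apply/eqP; rewrite -subr_eq0 -ha; apply/eqP; ring.
rewrite !eichlerE !QformE hww hwy hyw.
rewrite -[Q u y]conj_Qform // -[Q u w]conj_Qform // !(rmorphM, rmorphB, rmorphD) /= ha'.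
ring.
Qed.

Lemma det_eichler : \det (eichler w y a) = 1.
Proof.
have Qdual_ww : Qdual w *m w = 0 by rewrite [LHS]mx11_scalar QdualE hww raddf0.
set Z := a *: Qdual w - Qdual y.
have -> : eichler w y a = (1%:M + y *m Qdual w) *m (1%:M + w *m Z).
  rewrite mulmxDr mulmx1 mulmxDl mul1mx mulmxA -(mulmxA y) Qdual_ww.
  rewrite mulmx0 mul0mx addr0 /Z mulmxBr -scalemxAr /eichler.
  by rewrite (addrC (a *: _)) addrA.
rewrite det_mulmx !det1D_rank1 QdualE mulmxBl -scalemxAl Qdual_ww scaler0 sub0r.
by rewrite mxE QdualE hwy hyw oppr0 !addr0 mulr1.
Qed.

Lemma eichler_stabQ : a + a^* + Q y y = 0 -> stabQ H w (eichler w y a).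
Proof.
move=> ha; split; first by split; [exact: det_eichler | exact: eichler_Qform].
by rewrite eichlerE hww hyw mulr0 !scale0r subr0 !addr0.
Qed.

End IsotropicAxis.

Lemma stabQ_transitive w x x' :
  Q w w = 0 -> Q x x = 0 -> Q x' x' = 0 -> Q w x = Q w x' -> Q w x != 0 ->
  exists2 h, stabQ H w h & h *m x = x'.
Proof.
move=> hww hxx hx'x' hwx hc; set c := Q w x in hwx hc.
set y := c^-1 *: (x' - x); set a := Q y x / c.
have hx' : x' = x + c *: y by rewrite /y scalerA mulfV // scale1r addrC subrK.
have hwy : Q w y = 0 by rewrite /y QformZr QformBr -hwx subrr mulr0.
clearbody y.
have hcc : c^* != 0 by rewrite conjC_eq0.
have hy : c^* * Q y x + c * Q x y + c^* * c * Q y y = 0.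
  move: hx'x'; rewrite hx' !QformE hxx.
  by move=> <-; ring.
have ha : a + a^* + Q y y = 0.
  rewrite /a rmorphM fmorphV /= conj_Qform //.
  have -> : Q y x / c + Q x y / c^* + Q y y =
      (c^* * Q y x + c * Q x y + c^* * c * Q y y) / (c * c^*).
    by field; apply/andP.
  by rewrite hy mul0r.
exists (eichler w y a); first exact: eichler_stabQ.
by rewrite eichlerE -/c /a divfK // -hx' subrK.
Qed.

Lemma exists_Qform_neq0 v : H \in unitmx -> v != 0 -> exists y, Q y v != 0.
Proof.
move=> hU hv.
have hHv : H *m v != 0 by apply: contraNneq hv => h; rewrite -(mulKmx hU v) h mulmx0.
have /existsP [k hk] : [exists k, (H *m v) k 0 != 0].
  apply: contraNT hHv; rewrite negb_exists => /forallP h0.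
  apply/eqP/matrixP => k l; rewrite (ord1 l) [RHS]mxE.
  exact/eqP/negbNE/h0.
exists (delta_mx k 0); rewrite /Qform.
have -> : adjmx (delta_mx k 0 : 'cV[C]_N) = delta_mx 0 k.
  by apply/matrixP => i j; rewrite !mxE; case: (j == k); case: (i == 0);
     rewrite /= ?conjC1 ?conjC0.
by rewrite -mulmxA -rowE mxE.
Qed.

(* Either [v] already pairs with [w2]; or [v] is orthogonal to [w1] and [w2],
   and we take [y] pairing with [v] and orthogonal to [w1]; or [v] pairs with
   [w1], and [eichler w1 0 'i] adds a multiple of [w1] to it. *)
Lemma exists_stabQ_Qform_neq0 w1 w2 v :
  H \in unitmx -> Q w1 w1 = 0 -> Q w1 w2 != 0 -> v != 0 ->
  exists2 s, stabQ H w1 s & Q w2 (s *m v) != 0.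
Proof.
move=> hU h11 h12 hv.
have h21 : Q w2 w1 != 0 by rewrite -conj_Qform // conjC_eq0.
have [h2v | h2v] := eqVneq (Q w2 v) 0.
  2: by exists 1%:M; [exact: stabQ1 | rewrite mul1mx].
have [h1v | h1v] := eqVneq (Q w1 v) 0.
- have [y hy] := exists_Qform_neq0 hU hv.
  set u := y - (Q w1 y / Q w1 w2) *: w2.
  have h1u : Q w1 u = 0 by rewrite /u QformBr QformZr divfK // subrr.
  have huv : Q u v = Q y v by rewrite /u QformBl QformZl h2v mulr0 subr0.
  clearbody u.
  set a := - Q u u / 2%:R.
  have ha : a + a^* + Q u u = 0.
    rewrite /a rmorphM rmorphN fmorphV /= conj_Qform // conjC_nat.
    by field.
  exists (eichler w1 u a); first exact: eichler_stabQ.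
  rewrite eichlerE !QformE h2v h1v huv !(mulr0, add0r, subr0, addr0, mul0r).
  by rewrite oppr_eq0 mulf_neq0.
- have ha : 'i + 'i^* + Q 0 0 = 0 :> C by rewrite conjCi Qform0l addr0 subrr.
  exists (eichler w1 0 'i); first exact: eichler_stabQ h11 (Qform0r _ _) ha.
  rewrite eichlerE !QformE h2v !(mulr0, add0r, subr0, addr0, mul0r, oppr0).
  by rewrite !mulf_neq0 ?neq0Ci.
Qed.

End Eichler.

(** * Two isotropic vectors with Q(w1, w2) <> 0 *)

Section HyperbolicPair.
Variables (R : realType) (N : nat) (H : 'M[R[i]]_N).
Variables (w : 'I_N -> 'cV[R[i]]_N) (i1 i2 : 'I_N).
Hypotheses (hH : hermitian_mx H) (hU : H \in unitmx) (hb : is_basis_fam w).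
Hypotheses (hiso : forall i, Qform H (w i) (w i) = 0) (hne : i1 != i2).
Hypothesis hc : Qform H (w i1) (w i2) != 0.
Local Notation C := R[i].
Local Notation Q := (Qform H).
Local Notation w1 := (w i1).
Local Notation w2 := (w i2).

Let hc' : Q w2 w1 != 0.
Proof. by rewrite -conj_Qform // conjC_eq0. Qed.

Definition hproj y := (Q w2 y / Q w2 w1) *: w1 + (Q w1 y / Q w1 w2) *: w2.

Lemma Qform_sub_hproj y : Q w1 (y - hproj y) = 0 /\ Q w2 (y - hproj y) = 0.
Proof.
by rewrite /hproj !QformE !hiso; split; rewrite mulr0 ?add0r ?addr0 divfK // subrr.
Qed.

Lemma hproj_id : (forall z, Q w1 z = 0 -> Q w2 z = 0 -> Q z z = 0) ->
  forall y, hproj y = y.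
Proof.
move=> hiso_orth y; apply/eqP; rewrite eq_sym -subr_eq0; apply/eqP.
have Qorth0 z1 z2 : Q w1 z1 = 0 -> Q w2 z1 = 0 -> Q w1 z2 = 0 -> Q w2 z2 = 0 ->
    Q z1 z2 = 0.
  move=> h11 h21 h12 h22; apply: Qform_polarization => //; try apply: hiso_orth => //;
    by rewrite !QformE ?h11 ?h12 ?h21 ?h22 ?mulr0 addr0.
have [hz1 hz2] := Qform_sub_hproj y; move: (y - hproj y) hz1 hz2 => z hz1 hz2.
apply/eqP; apply: contraT => hz.
have [t ht] := exists_Qform_neq0 hU hz.
have [ht1 ht2] := Qform_sub_hproj t.
have e : Q t z = Q (t - hproj t) z.
  by rewrite /hproj !QformE hz1 hz2 !mulr0 !addr0 subr0.
by move: ht; rewrite e Qorth0 ?eqxx.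
Qed.

Let Wmx : 'M[C]_N := \matrix_(i, j) w j i 0.

Let Wmx_col j : Wmx *m delta_mx j 0 = w j.
Proof. by apply/matrixP => i k; rewrite (ord1 k) -colE !mxE. Qed.

Lemma hproj_id_index : (forall y, hproj y = y) -> forall k, (k == i1) || (k == i2).
Proof.
move=> hspan k; apply: contraT; rewrite negb_or => /andP [hk1 hk2].
set e : 'cV[C]_N := delta_mx k 0 - ((Q w2 (w k) / Q w2 w1) *: delta_mx i1 0 +
                                    (Q w1 (w k) / Q w1 w2) *: delta_mx i2 0).
have hWe : Wmx *m e = 0.
  by rewrite mulmxBr mulmxDr -!scalemxAr !Wmx_col -{1}[w k]hspan subrr.
have /matrixP/(_ k 0) : e = 0 by rewrite -(mulKmx hb e) hWe mulmx0.
rewrite /e !mxE !eqxx (negbTE hk1) (negbTE hk2) /= !mulr0 addr0 subr0.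
by move/eqP; rewrite oner_eq0.
Qed.

Lemma pair_scaling_real g lam : (forall k, (k == i1) || (k == i2)) -> SUQ H g ->
  g *m w1 = lam *: w1 -> g *m w2 = (lam^*)^-1 *: w2 -> lam = lam^*.
Proof.
move=> hall [hdet _] e1 e2.
set d : 'rV[C]_N := \row_j (if j == i1 then lam else (lam^*)^-1).
have hgW : g *m Wmx = Wmx *m diag_mx d.
  apply/matrixP => i j; rewrite mul_mx_diag.
  have -> : (g *m Wmx) i j = (g *m w j) i 0 by rewrite -Wmx_col mulmxA -colE [RHS]mxE.
  case/orP: (hall j) => /eqP ->; first by rewrite e1 !mxE eqxx mulrC.
  by rewrite e2 !mxE eq_sym (negbTE hne) mulrC.
have := congr1 determinant hgW; rewrite !det_mulmx hdet mul1r det_diag.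
rewrite (bigD1 i1) //= (bigD1 i2) /= ?(eq_sym i2) // big1 ?mulr1; last first.
  by move=> j /andP [hj1 hj2]; case/orP: (hall j) => /eqP e; [move: hj1 | move: hj2];
     rewrite e eqxx.
rewrite !mxE eqxx eq_sym (negbTE hne).
have hW : \det Wmx != 0 by rewrite -unitfE -unitmxE.
by rewrite -{1}[\det Wmx]mulr1 => /(mulfI hW) /esym /divr1_eq.
Qed.

Lemma exists_anisotropic_orth g lam : SUQ H g ->
  g *m w1 = lam *: w1 -> g *m w2 = (lam^*)^-1 *: w2 -> lam != lam^* ->
  exists z, [/\ Q w1 z = 0, Q w2 z = 0 & Q z z != 0].
Proof.
move=> hg e1 e2 hl.
have [//|hno] := pselect (exists z, [/\ Q w1 z = 0, Q w2 z = 0 & Q z z != 0]).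
case/eqP: hl; apply: pair_scaling_real hg e1 e2; apply/hproj_id_index/hproj_id => z h1 h2.
by apply/eqP; apply: contraT => hz; case: hno; exists z.
Qed.

Lemma exists_twist g lam : SUQ H g ->
  g *m w1 = lam *: w1 -> g *m w2 = (lam^*)^-1 *: w2 -> lam != 0 ->
  exists mu z, [/\ mu != 0, lam^* * mu + lam * mu^* = 0, mu + mu^* + Q z z = 0,
                   Q w1 z = 0 & Q w2 z = 0].
Proof.
move=> hg e1 e2 hl; have [hr | hr] := eqVneq lam lam^*.
  exists ('i * lam), 0; rewrite !Qform0r mulf_neq0 ?neq0Ci //.
  by split=> //; rewrite rmorphM /= conjCi -hr; ring.
have [z [h1 h2 hz]] := exists_anisotropic_orth hg e1 e2 hr.
have hq : (Q z z)^* = Q z z by rewrite conj_Qform.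
have hd : lam - lam^* != 0 by rewrite subr_eq0.
have hd' : lam^* - lam != 0 by rewrite subr_eq0 eq_sym.
exists (- Q z z / (lam - lam^*) * lam), z; split => //.
- by rewrite !mulf_neq0 ?oppr_eq0 ?invr_eq0.
- rewrite !(rmorphM, rmorphN, fmorphV, rmorphB) /= conjCK hq.
  by field; apply/andP.
- rewrite !(rmorphM, rmorphN, fmorphV, rmorphB) /= conjCK hq.
  by field; apply/andP.
Qed.

Section SubgroupContainingStabilizers.
Variable S : set 'M[C]_N.
Hypotheses (hS : S `<=` SUQ H) (hSsub : is_subgroup S).
Hypotheses (hS1 : stabQ H w1 `<=` S) (hS2 : stabQ H w2 `<=` S).

Let S_mul g h : S g -> S h -> S (g *m h).
Proof. by case: hSsub => _ + _; apply. Qed.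

Let S_inv g : S g -> S (invmx g).
Proof. by case: hSsub => _ _; apply. Qed.

Let S_transitive1 x x' : Q x x = 0 -> Q x' x' = 0 -> Q w1 x = Q w1 x' ->
  Q w1 x != 0 -> exists2 h, S h & h *m x = x'.
Proof.
move=> hx hx' hxx' hx0.
by have [h /hS1 Sh] := stabQ_transitive hH (hiso i1) hx hx' hxx' hx0; exists h.
Qed.

Let S_transitive2 x x' : Q x x = 0 -> Q x' x' = 0 -> Q w2 x = Q w2 x' ->
  Q w2 x != 0 -> exists2 h, S h & h *m x = x'.
Proof.
move=> hx hx' hxx' hx0.
by have [h /hS2 Sh] := stabQ_transitive hH (hiso i2) hx hx' hxx' hx0; exists h.
Qed.

Lemma S_scale_w1 g : SUQ H g ->
  exists t lam, [/\ S t, lam != 0 & t *m g *m w1 = lam *: w1].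
Proof.
move=> hg.
have w1_neq0 : w1 != 0 by apply: contraNneq hc => ->; rewrite Qform0l.
have gw1_neq0 : g *m w1 != 0.
  by apply: contraNneq w1_neq0 => h; rewrite -(mulKmx (SUQ_unitmx hg) w1) h mulmx0.
have [s hs hsv] := exists_stabQ_Qform_neq0 hH hU (hiso i1) hc gw1_neq0.
set v := s *m (g *m w1) in hsv.
set lam := Q w2 v / Q w2 w1.
have hv : Q v v = 0 by rewrite /v (proj2 hs.1) (proj2 hg) hiso.
have [h Sh hhv] : exists2 h, S h & h *m v = lam *: w1.
  apply: S_transitive2 => //; first by rewrite QformZl QformZr hiso !mulr0.
  by rewrite QformZr /lam divfK.
exists (h *m s), lam; split.
- exact/S_mul/hS1.
- by rewrite mulf_neq0 ?invr_eq0.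
- by rewrite -hhv /v !mulmxA.
Qed.

Lemma S_scale_pair g : SUQ H g -> exists t lam,
  [/\ S t, lam != 0, t *m g *m w1 = lam *: w1 & t *m g *m w2 = (lam^*)^-1 *: w2].
Proof.
move=> hg; have [t [lam [St hl tgw1]]] := S_scale_w1 hg.
have htg : SUQ H (t *m g) by apply: SUQ_mul => //; exact: hS.
have hlc : lam^* != 0 by rewrite conjC_eq0.
set u := t *m g *m w2.
have hu : Q w1 u = Q w1 w2 / lam^*.
  by rewrite -(proj2 htg w1 w2) tgw1 QformZl -/u mulrAC mulfV // mul1r.
have [h hh hhu] : exists2 h, stabQ H w1 h & h *m u = (lam^*)^-1 *: w2.
  apply: stabQ_transitive (hiso i1) _ _ _ _ => //.
  - by rewrite /u (proj2 htg) hiso.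
  - by rewrite QformZl QformZr hiso !mulr0.
  - by rewrite hu QformZr mulrC.
  - by rewrite hu mulf_neq0 ?invr_eq0.
exists (h *m t), lam; split => //; first exact/S_mul/St/hS1.
- by rewrite -!mulmxA (mulmxA t) tgw1 -scalemxAr hh.2.
- by rewrite -!mulmxA (mulmxA t) -/u.
Qed.

(* Route [lam w1 -> x -> x' -> w1] through isotropic vectors, alternating the
   two stabilizers; the twist [mu, z] is what makes [x] and [x'] isotropic. *)
Lemma S_unscale_w1 lam mu z : lam != 0 -> mu != 0 ->
  lam^* * mu + lam * mu^* = 0 -> mu + mu^* + Q z z = 0 ->
  Q w1 z = 0 -> Q w2 z = 0 ->
  exists2 t, S t & t *m (lam *: w1) = w1.
Proof.
move=> hl hmu hx_iso hx'_iso hz1 hz2.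
have hz1' : Q z w1 = 0 by rewrite -conj_Qform // hz1 conjC0.
have hz2' : Q z w2 = 0 by rewrite -conj_Qform // hz2 conjC0.
set beta := mu / Q w1 w2.
have hbc : beta * Q w1 w2 = mu by rewrite /beta divfK.
have hbc' : beta^* * Q w2 w1 = mu^* by rewrite -conj_Qform // -rmorphM hbc.
set x := lam *: w1 + beta *: w2.
set x' := w1 + beta *: w2 + z.
have hxx : Q x x = 0.
  by rewrite /x !QformE !hiso !mulr0 !addr0 add0r -hx_iso -hbc' -hbc; ring.
have hx'x' : Q x' x' = 0.
  by rewrite /x' !QformE !hiso hz1 hz2 hz1' hz2' !mulr0 !addr0 !add0r hbc hbc'.
have [h1 Sh1 e1] : exists2 h, S h & h *m (lam *: w1) = x.
  apply: S_transitive2 => //; first by rewrite !QformE hiso !mulr0.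
  - by rewrite /x !QformE hiso mulr0 addr0.
  - by rewrite QformZr mulf_neq0.
have [h2 Sh2 e2] : exists2 h, S h & h *m x = x'.
  apply: S_transitive1 => //.
  - by rewrite /x /x' !QformE !hiso hz1 !mulr0 !addr0 add0r.
  - by rewrite /x !QformE !hiso mulr0 add0r hbc.
have [h3 Sh3 e3] : exists2 h, S h & h *m x' = w1.
  apply: S_transitive2 => //.
  - by rewrite /x' !QformE !hiso hz2 mulr0 !addr0.
  - by rewrite /x' !QformE !hiso hz2 mulr0 !addr0.
by exists (h3 *m (h2 *m h1)); [exact/S_mul/S_mul | rewrite -!mulmxA e1 e2].
Qed.

Lemma SUQ_sub_S : SUQ H `<=` S.
Proof.
move=> g hg.
have [t [lam [St hl tgw1 tgw2]]] := S_scale_pair hg.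
have htg : SUQ H (t *m g) by apply: SUQ_mul => //; exact: hS.
have [mu [z [hmu hx hx' hz1 hz2]]] := exists_twist htg tgw1 tgw2 hl.
have [t' St' t'w1] := S_unscale_w1 hl hmu hx hx' hz1 hz2.
have Sg' : S (t' *m t *m g).
  apply: hS1; split; first by apply: SUQ_mul => //; apply: SUQ_mul; exact: hS.
  by rewrite -!mulmxA (mulmxA t) tgw1.
rewrite -(mulKmx (SUQ_unitmx (hS (S_mul St' St))) g).
exact: S_mul (S_inv (S_mul St' St)) Sg'.
Qed.

End SubgroupContainingStabilizers.

End HyperbolicPair.

Lemma isotropic_basis_distinct_indices (R : realType) (N : nat) (H : 'M[R[i]]_N)
    (w : 'I_N -> 'cV[R[i]]_N) :
  hf_nondegenerate H -> hf_nondefinite H -> is_basis_fam w ->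
  (forall i, Qform H (w i) (w i) = 0) -> exists i1 i2 : 'I_N, i1 != i2.
Proof.
case: N H w => [|[|n]] H w hU [[u hu] _] hb hiso; last by exists ord0, ord_max.
  by move: hu; rewrite /Qform mxE big_ord0 ltxx.
move: (hiso ord0); rewrite /Qform !mxE !big_ord1 !mxE big_ord1 !mxE.
move: hb hU; rewrite /is_basis_fam /hf_nondegenerate !unitmxE !det_mx11 mxE !unitfE.
by move=> hw hH /eqP; rewrite !mulf_eq0 conjC_eq0 (negbTE hw) (negbTE hH).
Qed.

Theorem mainTheorem13 (R : realType) (N : nat) (H : 'M[R[i]]_N)
    (w : 'I_N -> 'cV[R[i]]_N) :
  hermitian_mx H -> hf_nondegenerate H -> hf_nondefinite H ->
  is_basis_fam w ->
  (forall i, Qform H (w i) (w i) = 0) ->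
  (forall i j, i != j -> Qform H (w i) (w j) != 0) ->
  closed_subgroup_gen H (fun i => stabQ H (w i)) = SUQ H.
Proof.
move=> hH hU hnd hb hiso hne.
have [i1 [i2 hi]] := isotropic_basis_distinct_indices hU hnd hb hiso.
apply/seteqP; split => [g hg | g hg S [hS hSsub _ hSw]].
- apply: hg; split; [by [] | exact: SUQ_subgroup | exact: SUQ_closed | by move=> i g' []].
- exact: (SUQ_sub_S hH hU hb hiso hi (hne _ _ hi) hS hSsub (hSw i1) (hSw i2) hg).
Qed.
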